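(* Let $\beta_0,\beta_1,\beta_2,\beta_3,\beta_4\in\mathbb{R}$, and put $$L^{+}:=\sqrt{(\beta_1+\beta_4)^2+(\beta_2-\beta_3)^2},\qquad L^{-}:=\sqrt{(\beta_1-\beta_4)^2+(\beta_2+\beta_3)^2}.$$ Let $\rho$ be a generalised two-qubit $X$-state of Group 2 of Type I with maximally-mixed subsystems ($\tau_1=\tau_2=0$) and these parameters, so that the eigenvalues of $\rho$ are $\tfrac14(1+\beta_0\pm L^{-})$, $\tfrac14(1-\beta_0\pm L^{+})$. Suppose $\rho$ is valid and entangled. Then $\beta_0<0$ if and only if $L^{+}>L^{-}$.
   Context: A two-qubit Hermitian $4\times4$ matrix $\rho$ of trace one is called valid if it is positive semidefinite. For a valid $\rho$, $\rho^{\Gamma}$ denotes its partial transpose (with respect to either qubit). $\rho$ is called separable if $\rho^{\Gamma}$ is positive semidefinite and entangled otherwise (PPT criterion). Group 2 $X$-states are two-qubit density matrices of the form $\rho=\tfrac14(I\otimes I+\sum_{q}c_q\,q)$, where $q$ ranges over the seven nontrivial Pauli operators commuting with a fixed operator $A\otimes B$ with $A,B\in\{X,Y,Z\}$. Example: for $A\otimes B=Z\otimes Z$, $\rho=\tfrac14(I\otimes I+\tau_1 Z\otimes I+\tau_2 I\otimes Z+\beta_0 Z\otimes Z+\beta_1 X\otimes X+\beta_2 X\otimes Y+\beta_3 Y\otimes X+\beta_4 Y\otimes Y)$. In general $\tau_1,\tau_2$ are the coefficients of the two local operators, $\beta_0$ is the coefficient of the correlation operator sharing no tensor factor with the other correlation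 operators, and $\beta_1,\beta_2,\beta_3,\beta_4$ are the entries of the remaining $2\times2$ block $\begin{pmatrix}\beta_1&\beta_2\\ \beta_3&\beta_4\end{pmatrix}$ of the correlation matrix. ''Maximally-mixed subsystems'' means $\tau_1=\tau_2=0$. Such a state with $\tau_1=\tau_2=0$ is of Type I if the eigenvalues of $\rho$ are $\tfrac14(1+\beta_0\pm L^{-})$ and $\tfrac14(1-\beta_0\pm L^{+})$, and the eigenvalues of $\rho^{\Gamma}$ are $\tfrac14(1+\beta_0\pm L^{+})$ and $\tfrac14(1-\beta_0\pm L^{-})$. The $Z\otimes Z$ example above is of Type I. *)

From HB Require Import structures.
From mathcomp Require Import all_boot all_order all_algebra.
From mathcomp Require Import reals.
From mathcomp Require Import complex.
Set Implicit Arguments. Unset Strict Implicit. Unset Printing Implicit Defensive.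
Import Order.TTheory GRing.Theory Num.Theory.
Local Open Scope ring_scope.

Inductive axis := AX | AY | AZ.

Section Qubits.
Variable R : realType.
Local Notation C := (R[i]).

Definition pauliI : 'M[C]_2 := 1%:M.
Definition pauli (a : axis) : 'M[C]_2 :=
  match a with
  | AX => \matrix_(i < 2, j < 2) (if i == j then 0 else 1)
  | AY => \matrix_(i < 2, j < 2)
            (if i == j then 0 else if (i : nat) == 0%N then - 'i else 'i)%C
  | AZ => \matrix_(i < 2, j < 2)
            (if i == j then (if (i : nat) == 0%N then 1 else -1) else 0)
  end.

(* Two-qubit indexing: basis index k of C^4 = C^2 (x) C^2 is k = 2 a + b. *)
Definition q1 (k : 'I_4) : 'I_2 := inord (k %/ 2).
Definition q2 (k : 'I_4) : 'I_2 := inord (k %% 2).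
Definition idx2 (a b : 'I_2) : 'I_4 := inord (2 * a + b).

Definition kron2 (A B : 'M[C]_2) : 'M[C]_4 :=
  \matrix_(k, l) (A (q1 k) (q1 l) * B (q2 k) (q2 l)).

Definition ptrans (M : 'M[C]_4) : 'M[C]_4 :=
  \matrix_(k, l) M (idx2 (q1 k) (q2 l)) (idx2 (q1 l) (q2 k)).

Definition adjmx (M : 'M[C]_4) : 'M[C]_4 := \matrix_(k, l) ((M l k)^*)%C.

Definition hermitian (M : 'M[C]_4) : Prop := adjmx M = M.

Definition dagv (v : 'cV[C]_4) : 'rV[C]_4 := \row_k ((v k 0)^*)%C.

(* Positive semidefinite: Hermitian with v^dagger M v >= 0 for all v
   (in the ordered field R[i], 0 <= z means z is real and nonnegative). *)
Definition psd (M : 'M[C]_4) : Prop :=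
  hermitian M /\ forall v : 'cV[C]_4, 0 <= (dagv v *m M *m v) 0 0.

Definition valid (rho : 'M[C]_4) : Prop :=
  hermitian rho /\ \tr rho = 1 /\ psd rho.

(* PPT criterion: separable iff rho^Gamma is PSD, entangled otherwise. *)
Definition separable (rho : 'M[C]_4) : Prop := psd (ptrans rho).
Definition entangled (rho : 'M[C]_4) : Prop := ~ psd (ptrans rho).

Definition nxt (a : axis) : axis :=
  match a with AX => AY | AY => AZ | AZ => AX end.

Definition group2_state (a b : axis) (t1 t2 b0 b1 b2 b3 b4 : R) : 'M[C]_4 :=
  let a1 := nxt a in let a2 := nxt (nxt a) in
  let b1' := nxt b in let b2' := nxt (nxt b) in
  (4%:R)^-1 *: (kron2 pauliI pauliI
     + (t1%:C)%C *: kron2 (pauli a) pauliI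
     + (t2%:C)%C *: kron2 pauliI (pauli b)
     + (b0%:C)%C *: kron2 (pauli a) (pauli b)
     + (b1%:C)%C *: kron2 (pauli a1) (pauli b1')
     + (b2%:C)%C *: kron2 (pauli a1) (pauli b2')
     + (b3%:C)%C *: kron2 (pauli a2) (pauli b1')
     + (b4%:C)%C *: kron2 (pauli a2) (pauli b2')).

Definition Lplus (b1 b2 b3 b4 : R) : R :=
  Num.sqrt ((b1 + b4) ^+ 2 + (b2 - b3) ^+ 2).
Definition Lminus (b1 b2 b3 b4 : R) : R :=
  Num.sqrt ((b1 - b4) ^+ 2 + (b2 + b3) ^+ 2).

Definition has_eigenvalues (M : 'M[C]_4) (s : seq R) : Prop :=
  char_poly M = \prod_(l <- s) ('X - ((l%:C)%C)%:P).

(* Type I (for tau1 = tau2 = 0): spectra of rho and rho^Gamma. *)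
Definition typeI (rho : 'M[C]_4) (b0 Lp Lm : R) : Prop :=
  has_eigenvalues rho
    [:: (1 + b0 + Lm) / 4%:R; (1 + b0 - Lm) / 4%:R;
        (1 - b0 + Lp) / 4%:R; (1 - b0 - Lp) / 4%:R]
  /\ has_eigenvalues (ptrans rho)
    [:: (1 + b0 + Lp) / 4%:R; (1 + b0 - Lp) / 4%:R;
        (1 - b0 + Lm) / 4%:R; (1 - b0 - Lm) / 4%:R].

End Qubits.

From Pilot Require Import Defs.
From HB Require Import structures.
From mathcomp Require Import all_boot all_order all_algebra.
From mathcomp Require Import reals complex spectral.
From mathcomp Require Import ring lra.
Set Implicit Arguments.
Unset Strict Implicit.
Unset Printing Implicit Defensive.

Import Order.TTheory GRing.Theory Num.Theory.
Local Open Scope ring_scope.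
Local Open Scope sesquilinear_scope.

(* By the spectral theorem a Hermitian matrix is positive semidefinite iff
   its eigenvalues are nonnegative.  Validity of rho thus gives
   L- <= 1 + b0 and L+ <= 1 - b0, while entanglement means L+ > 1 + b0 or
   L- > 1 - b0.  If b0 < 0 the second alternative is excluded, since
   L- <= 1 + b0 < 1 - b0, so L+ > 1 + b0 >= L-; if b0 >= 0 the first one is
   excluded symmetrically and L- > 1 - b0 >= L+. *)

Lemma root_char_poly_normalmx (C : numClosedFieldType) n (M : 'M[C]_n.+1) x :
  M \is normalmx ->
  root (char_poly M) x = (x \in [seq spectral_diag M 0 i | i <- enum 'I_n.+1]).
Proof.
move=> /orthomx_spectralP eM.
set P := spectralmx M in eM; set d := spectral_diag M in eM *.
have Pu : P \in unitmx by apply: spectral_unit.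
have simPM : similar P M (diag_mx d).
  by apply/similarP => //; rewrite {1}eM !mulmxA mulmxV // mul1mx.
rewrite -root_mxminpoly (similar_mxminpoly Pu simPM) root_mxminpoly.
rewrite char_poly_trig ?diag_mx_is_trig // -root_prod_XsubC big_map big_enum /=.
by under eq_bigr => i _ do rewrite mxE eqxx mulr1n.
Qed.

Section PositiveSemidefinite.
Variable R : realType.
Local Notation C := (R[i]).
Implicit Types (M P : 'M[C]_4) (v : 'cV[C]_4).

Lemma hermitian_trmxC M : Defs.hermitian M -> M ^t* = M.
Proof. by move=> hM; rewrite -{2}hM; apply/matrixP => k l; rewrite !mxE. Qed.

Lemma hermitian_normal M : Defs.hermitian M -> M \is normalmx.
Proof. by move=> /hermitian_trmxC hM; apply/normalmxP; rewrite hM. Qed.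

Lemma hermitian_ptrans M : Defs.hermitian M -> Defs.hermitian (ptrans M).
Proof. by move=> hM; apply/matrixP => k l; rewrite !mxE -{2}hM mxE. Qed.

Lemma dagv_mulmx P v : dagv (P *m v) = dagv v *m P ^t*.
Proof.
apply/matrixP => i j; rewrite !mxE rmorph_sum; apply: eq_bigr => k _.
by rewrite !mxE rmorphM mulrC.
Qed.

Lemma dagv_diag_mx_quad (d : 'rV[C]_4) v :
  (dagv v *m diag_mx d *m v) 0 0 = \sum_i d 0 i * ((v i 0)^*)%C * v i 0.
Proof.
rewrite mul_mx_diag !mxE; apply: eq_bigr => k _.
by rewrite !mxE [_ * d 0 k]mulrC.
Qed.

Lemma hermitian_quad_spectral M v : Defs.hermitian M ->
  (dagv v *m M *m v) 0 0 = \sum_i spectral_diag M 0 i *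
      (((spectralmx M *m v) i 0)^*)%C * (spectralmx M *m v) i 0.
Proof.
move=> /hermitian_normal /orthomx_spectralP eM.
have Pu := spectral_unitarymx M.
by rewrite -dagv_diag_mx_quad dagv_mulmx {1}eM invmx_unitary // !mulmxA.
Qed.

Lemma psd_eigenvaluesP M s : Defs.hermitian M -> has_eigenvalues M s ->
  psd M <-> {in s, forall l, 0 <= l}.
Proof.
move=> hM charM; set d := spectral_diag M.
have spec_s x :
    (x \in [seq (l%:C)%C | l <- s]) = (x \in [seq d 0 i | i <- enum 'I_4]).
  by rewrite -root_char_poly_normalmx ?hermitian_normal // charM
             -root_prod_XsubC big_map.
split=> [[_ quad_ge0] l ls | eig_ge0].
- have /mapP[i _ dil] : (l%:C)%C \in [seq d 0 i | i <- enum 'I_4].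
    by rewrite -spec_s map_f.
  (* the i-th column of the unitary diagonaliser is an eigenvector for d 0 i *)
  have := quad_ge0 (spectralmx M ^t* *m delta_mx i 0).
  rewrite hermitian_quad_spectral // mulmxA.
  move/unitarymxP: (spectral_unitarymx M) => ->; rewrite mul1mx.
  rewrite (bigD1 i) //= big1 => [|j /negbTE nji]; last first.
    by rewrite !mxE nji mulr0.
  by rewrite !mxE !eqxx andbT mulr1n addr0 conjc1 !mulr1 -/d -dil ler0c.
- split=> // v; rewrite hermitian_quad_spectral //; apply: sumr_ge0 => i _.
  have /mapP[l ls ->] : d 0 i \in [seq (l%:C)%C | l <- s].
    by rewrite spec_s map_f ?mem_enum.
  by rewrite -mulrA mulr_ge0 ?ler0c ?eig_ge0 // mulrC mul_conjC_ge0.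
Qed.

End PositiveSemidefinite.

Section TypeISpectra.
Variable R : realFieldType.

Lemma pm_spectrum_ge0 (x y L1 L2 : R) : 0 <= L1 -> 0 <= L2 ->
  {in [:: (x + L1) / 4%:R; (x - L1) / 4%:R; (y + L2) / 4%:R; (y - L2) / 4%:R],
     forall l, 0 <= l} <-> L1 <= x /\ L2 <= y.
Proof.
move=> L1_ge0 L2_ge0; split=> [spec_ge0 | [L1x L2y] l].
- have := spec_ge0 ((x - L1) / 4%:R); have := spec_ge0 ((y - L2) / 4%:R).
  rewrite !inE !eqxx !orbT => /(_ isT) y_ge0 /(_ isT) x_ge0; lra.
- by rewrite !inE => /or4P[] /eqP ->; apply: divr_ge0 => //; lra.
Qed.

Lemma ltr0_iff_lt_of_bounds (b0 Lp Lm : R) :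
  Lm <= 1 + b0 -> Lp <= 1 - b0 -> ~ (Lp <= 1 + b0 /\ Lm <= 1 - b0) ->
  (b0 < 0 <-> Lm < Lp).
Proof.
move=> Lm_le Lp_le not_both.
case: (lerP Lp (1 + b0)) => Lp_b0; case: (lerP Lm (1 - b0)) => Lm_b0;
  first by case: not_both.
all: split=> ?; lra.
Qed.

End TypeISpectra.

Theorem proposition1 (R : realType) (a b : axis) (b0 b1 b2 b3 b4 : R) :
  let rho := group2_state a b 0 0 b0 b1 b2 b3 b4 in
  let Lp := Lplus b1 b2 b3 b4 in
  let Lm := Lminus b1 b2 b3 b4 in
  typeI rho b0 Lp Lm ->
  valid rho ->
  entangled rho ->
  (b0 < 0 <-> Lm < Lp).
Proof.
move=> rho Lp Lm [spec_rho spec_rhoG] [herm_rho [_ psd_rho]] ent.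
have Lp_ge0 : 0 <= Lp by apply: sqrtr_ge0.
have Lm_ge0 : 0 <= Lm by apply: sqrtr_ge0.
have [Lm_le Lp_le] : Lm <= 1 + b0 /\ Lp <= 1 - b0.
  apply/(pm_spectrum_ge0 _ _ Lm_ge0 Lp_ge0).
  exact: (psd_eigenvaluesP herm_rho spec_rho).1.
apply: (ltr0_iff_lt_of_bounds Lm_le Lp_le).
move=> /(pm_spectrum_ge0 _ _ Lp_ge0 Lm_ge0) spec_ge0.
exact/ent/(psd_eigenvaluesP (hermitian_ptrans herm_rho) spec_rhoG).
Qed.
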